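(* Let $L$ spin-orbitals be indexed by $\{1,\dots,L\}$ and let $N_{\mathrm{occ}}$ be an integer with $1\le N_{\mathrm{occ}}<L$. Call an operator an o-operator if it is a creation or annihilation operator $\hat a^\dagger_p$ or $\hat a_p$ with $p\in\{1,\dots,N_{\mathrm{occ}}\}$, and a v-operator if $p\in\{N_{\mathrm{occ}}+1,\dots,L\}$. Let $n_o,n_v\geq 0$ and consider $n_o$ o-creation operators, $n_o$ o-annihilation operators, $n_v$ v-creation operators and $n_v$ v-annihilation operators, all regarded as $2n_o+2n_v$ distinct objects. Call an ordering of these operators into a chain of length $2n_o+2n_v$ admissible if both of the following hold: (a) the word obtained by reading the o-operators of the chain from left to right and replacing each o-creation operator by ''('' and each o-annihilation operator by '')'' is a Dyck word; (b) the word obtained by reading the v-operators of the chain from left to right and replacing each v-annihilation operator by ''('' and each v-creation operator by '')'' is a Dyck word. Then the number of admissible orderings is $$C_{n_o}\,C_{n_v}\,\binom{2n_o+2n_v}{2n_o}\,(n_o!)^2\,(n_v!)^2,$$ where $C_m=\frac{1}{m+1}\binom{2m}{m}$ is the $m$-th Catalan number.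
   Context: A Dyck word is a finite word over $\{(,)\}$ with as many opening as closing brackets, every prefix of which contains at least as many opening as closing brackets (the empty word is a Dyck word). The reference state is the Fermi vacuum, the Slater determinant in which spin-orbitals $1,\dots,N_{\mathrm{occ}}$ are occupied and the others are empty; the pair of words in (a),(b) is the paper's ''split-$\mathcal{L}_2$ translation'', and the paper calls admissible chains those whose expectation value relatively to the Fermi vacuum is ''possibly different from zero'', since otherwise that expectation value vanishes. *)

From mathcomp Require Import all_boot all_fingroup.
Set Implicit Arguments. Unset Strict Implicit. Unset Printing Implicit Defensive.

Inductive opkind := OCre | OAnn | VCre | VAnn.

(* Dyck words over {(,)} encoded as seq bool, with true = "(" and false = ")".
   Every prefix has at least as many "(" as ")" and the whole word is balanced. *)
Definition dyck (w : seq bool) : bool :=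
  all (fun k => count (fun b => ~~ b) (take k w) <= count id (take k w))
      (iota 0 (size w).+1)
  && (count id w == count (fun b => ~~ b) w).

(* The 2no+2nv distinct operators are labelled by 'I_(no+no+nv+nv):
   labels [0,no) are o-creation, [no,2no) o-annihilation,
   [2no,2no+nv) v-creation, [2no+nv,2no+2nv) v-annihilation. *)
Definition kind_of (no nv : nat) (i : 'I_(no + no + nv + nv)) : opkind :=
  if i < no then OCre
  else if i < no + no then OAnn
  else if i < no + no + nv then VCre
  else VAnn.

(* A chain (ordering) is a permutation s: position j holds operator s j. *)
Definition chain_kinds (no nv : nat) (s : {perm 'I_(no + no + nv + nv)}) : seq opkind :=
  [seq kind_of (s j) | j <- enum 'I_(no + no + nv + nv)].

Definition o_word (ks : seq opkind) : seq bool :=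
  pmap (fun k => match k with OCre => Some true | OAnn => Some false | _ => None end) ks.

Definition v_word (ks : seq opkind) : seq bool :=
  pmap (fun k => match k with VAnn => Some true | VCre => Some false | _ => None end) ks.

Definition admissible (no nv : nat) (s : {perm 'I_(no + no + nv + nv)}) : bool :=
  dyck (o_word (chain_kinds s)) && dyck (v_word (chain_kinds s)).

(* Catalan number C_m = binom(2m,m)/(m+1) (exact division). *)
Definition catalan (m : nat) : nat := 'C(m.*2, m) %/ m.+1.

From HB Require Import structures.
From mathcomp Require Import all_boot all_fingroup.
From mathcomp Require Import zify.
Set Implicit Arguments. Unset Strict Implicit. Unset Printing Implicit Defensive.

(* An ordering of the labelled operators is determined by its word of operator
   kinds together with, for each kind, the order in which the operators of that
   kind occur; hence every admissible kind word accounts for (no!)^2 (nv!)^2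
   orderings.  A kind word is determined by the set of its o-positions (one of
   'C(2no+2nv, 2no) choices), its o-word and its v-word, and it is admissible
   iff these are Dyck words, of lengths 2no and 2nv.  Finally, by Andre's
   reflection principle there are 'C(2n,n) - 'C(2n,n+1) = C_n Dyck words of
   length 2n: flipping every letter up to the first prefix with more ")" than
   "(" maps the balanced non-Dyck words bijectively onto the words with n+1
   letters "(". *)

Lemma card_tuple_cons (T : finType) n (P : pred (n.+1.-tuple T)) :
  #|[set t : n.+1.-tuple T | P t]| =
  \sum_(x : T) #|[set t : n.-tuple T | P [tuple of x :: t]]|.
Proof.
rewrite -sum1dep_card (partition_big (@thead _ _) predT) //=.
apply: eq_bigr => x _; rewrite -sum1dep_card.
rewrite (reindex (fun t : n.-tuple T => [tuple of x :: t])) /=; last first.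
  pose ttail (t : n.+1.-tuple T) := [tuple of behead t].
  exists ttail => [t _ | t /andP[_ /eqP <-]]; first exact: val_inj.
  by rewrite -tuple_eta.
by apply: eq_bigl => t; rewrite theadE eqxx andbT.
Qed.

Lemma card_tuples_count_true m k :
  #|[set t : m.-tuple bool | count_mem true t == k]| = 'C(m, k).
Proof.
elim: m k => [|m IHm] k.
  by case: k => [|k]; [apply: (@eq_card1 _ [tuple]) | apply: eq_card0];
    move=> t; rewrite [t]tuple0 !inE.
rewrite card_tuple_cons big_bool /=.
case: k => [|k].
  rewrite eq_card0 => [|t]; last by rewrite !inE.
  by rewrite bin0 -(bin0 m) -IHm; apply: eq_card => t; rewrite !inE.
by rewrite binS -!IHm addnC; congr (_ + _); apply: eq_card => t; rewrite !inE.
Qed.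

Lemma sum_count_mem (K : finType) (s : seq K) : \sum_k count_mem k s = size s.
Proof.
elim: s => [|x s IHs] /=; first by rewrite big1.
rewrite big_split IHs /= (bigD1 x) //= eqxx big1 // => k /negbTE.
by rewrite eq_sym => ->.
Qed.

Lemma sum_card_fibers (T K : finType) (f : T -> K) :
  \sum_k #|f @^-1: [set k]| = #|T|.
Proof.
rewrite -sum1_card (partition_big f predT) //=; apply: eq_bigr => k _.
by rewrite sum1dep_card; apply: eq_card => x; rewrite !inE.
Qed.

Lemma prod_ffact_eq_sum (I : finType) (c m : I -> nat) :
  \sum_i m i = \sum_i c i ->
  \prod_i c i ^_ m i = if [forall i, m i == c i] then \prod_i (c i)`! else 0.
Proof.
move=> eq_sum; case: forallP => [eq_mc | neq_mc].
  by apply: eq_bigr => i _; rewrite (eqP (eq_mc i)) ffactnn.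
have [i lt_ci] : exists i, c i < m i.
  apply/existsP; apply: contraT; rewrite negb_exists => /forallP le_mc.
  have := @leqif_sum I predT (fun i => m i == c i) m c.
  case=> [i _ | _ /esym]; first by apply/leqif_eq; rewrite leqNgt le_mc.
  by rewrite eq_sum eqxx => /forallP eq_mc; case: neq_mc => j; apply: eq_mc.
by rewrite (bigD1 i) //= ffact_small.
Qed.

Section LabelledTuples.
Variables (T K : finType) (lab : T -> K).

Lemma card_uniq_tuples_labelled n (A : {set T}) (w : n.-tuple K) :
  #|[set t : n.-tuple T | [&& all [in A] t, uniq t & map lab t == w]]| =
  \prod_k #|A :&: lab @^-1: [set k]| ^_ count_mem k w.
Proof.
elim: n A w => [|n IHn] A w.
  rewrite [w]tuple0 big1 => [|k _]; last exact: ffactn0.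
  by apply: (@eq_card1 _ [tuple]) => t; rewrite [t]tuple0 !inE.
case/tupleP: w => k w; rewrite card_tuple_cons.
pose c j := #|A :&: lab @^-1: [set j]|.
transitivity (\sum_(x in A :&: lab @^-1: [set k])
                \prod_j #|(A :\ x) :&: lab @^-1: [set j]| ^_ count_mem j w).
  rewrite [RHS]big_mkcond; apply: eq_bigr => x _; rewrite -IHn [x \in _]inE.
  case: (boolP (x \in A)) => [Ax | nAx] /=; last first.
    by apply: eq_card0 => t; rewrite !inE /= (negbTE nAx).
  rewrite !inE; case: (boolP (lab x == k)) => [/eqP labx | nlabx] /=; last first.
    by apply: eq_card0 => t; rewrite !inE /= eqseq_cons (negbTE nlabx) !andbF.
  apply: eq_card => t; rewrite !inE /= Ax labx eqseq_cons eqxx /=.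
  have -> : all [in A :\ x] t = (x \notin t) && all [in A] t.
    by rewrite -has_pred1 -all_predC -all_predI; apply: eq_all => y; rewrite !inE.
  by case: (x \in t); case: (all _ t).
rewrite (eq_bigr (fun=> (c k).-1 ^_ count_mem k w *
                        \prod_(j | j != k) c j ^_ count_mem j w)); last first.
  move=> x; rewrite inE => /andP [Ax labx]; rewrite (bigD1 k) //=; congr (_ ^_ _ * _).
    rewrite /c (cardsD1 x (A :&: _)) in_setI Ax labx /= add0n.
    by apply: eq_card => y; rewrite !inE andbA.
  apply: eq_bigr => j ne_jk; congr (_ ^_ _); apply: eq_card => y; rewrite !inE.
  case: eqP => [-> | _] //; move: labx; rewrite !inE => /eqP ->.
  by rewrite eq_sym (negbTE ne_jk) !andbF.
rewrite sum_nat_const [RHS](bigD1 k) //= eqxx add1n ffactnS mulnA; congr (_ * _).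
by apply: eq_bigr => j ne_jk; rewrite /= eq_sym (negbTE ne_jk).
Qed.

Lemma card_uniq_tuples_by_content n (c : K -> nat) (P : pred (seq K)) :
  n = #|T| -> (forall k, #|lab @^-1: [set k]| = c k) ->
  #|[set t : n.-tuple T | uniq t && P (map lab t)]| =
  #|[set w : n.-tuple K | P w && [forall k, count_mem k w == c k]]| * \prod_k (c k)`!.
Proof.
move=> nT card_lab; rewrite -sum1dep_card (partition_big (map_tuple lab) P) => [|t /andP[] //].
rewrite (eq_bigr (fun w : n.-tuple K =>
                    if [forall k, count_mem k w == c k] then \prod_k (c k)`! else 0)).
  by rewrite -big_mkcondr sum_nat_const; congr (_ * _); apply: eq_card => w; rewrite !inE.
move=> w Pw; rewrite sum1dep_card.
rewrite -prod_ffact_eq_sum; last first.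
  by rewrite sum_count_mem size_tuple nT -(sum_card_fibers lab); apply: eq_bigr.
have := card_uniq_tuples_labelled [set: T] w; under eq_bigr do rewrite setTI card_lab.
move=> <-; apply: eq_card => t; rewrite !inE -val_eqE /=.
have -> : all [in [set: T]] t by apply/allP => x _; rewrite inE.
by case: eqP => [-> | _]; rewrite ?Pw ?andbT ?andbF.
Qed.

End LabelledTuples.

Lemma card_perm_ord_tuples N (P : pred (seq 'I_N)) :
  #|[set s : {perm 'I_N} | P [seq s i | i <- enum 'I_N]]| =
  #|[set t : N.-tuple 'I_N | uniq t && P t]|.
Proof.
pose tuple_of_perm (s : {perm 'I_N}) := [tuple s i | i < N].
have inj_tp : injective tuple_of_perm.
  move=> s1 s2 eq_s; apply/permP => i.
  by have := congr1 (fun t => tnth t i) eq_s; rewrite !tnth_mktuple.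
rewrite -(card_imset _ inj_tp); apply: eq_card => t; rewrite inE.
apply/imsetP/andP => [[s Ps ->] | [uniq_t Pt]].
  rewrite inE in Ps; split=> //.
  by rewrite map_inj_uniq ?enum_uniq //; apply: perm_inj.
have inj_t : injective (tnth t) by apply/tuple_uniqP.
exists (perm inj_t); last by apply: eq_from_tnth => i; rewrite tnth_mktuple permE.
by rewrite inE (eq_map (permE inj_t)) map_tnth_enum.
Qed.

Lemma card_ord_range N lo hi : hi <= N -> #|[set i : 'I_N | lo <= i < hi]| = hi - lo.
Proof.
move=> le_hiN; rewrite -sum1dep_card -[hi - lo]muln1 -sum_nat_const_nat big_geq_mkord.
rewrite (@big_ord_widen_cond _ _ _ hi N (fun i => true && (lo <= i)) (fun=> 1) le_hiN).
by apply: eq_bigl => i; rewrite andbC.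
Qed.

Lemma count_pmap_mem (T U : eqType) (f : T -> option U) (s : seq T) y :
  count_mem y (pmap f s) = count (fun x => f x == Some y) s.
Proof. by elim: s => //= x s IHs; case: (f x) => [z|] /=; rewrite IHs. Qed.

Lemma eq_find_prefix (T : eqType) (a1 a2 : pred T) (s : seq T) :
  {in take (find a1 s).+1 s, a1 =1 a2} -> find a2 s = find a1 s.
Proof.
elim: s => //= x s IHs eq_a12; rewrite -eq_a12 ?mem_head //.
case: (a1 x) eq_a12 => //= eq_a12; congr _.+1; apply: IHs => y y_s.
by apply: eq_a12; rewrite inE y_s orbT.
Qed.

Lemma count_mem_map_negb b (s : seq bool) : count_mem b (map negb s) = count_mem (~~ b) s.
Proof. by rewrite count_map; apply: eq_count => x; case: b; case: x. Qed.

Lemma count_true_false (s : seq bool) : count_mem true s + count_mem false s = size s.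
Proof. by rewrite -(count_predC (pred1 true)); congr (_ + _); apply: eq_count; case. Qed.

Definition flip_prefix k (w : seq bool) := map negb (take k w) ++ drop k w.

Lemma size_flip_prefix k w : size (flip_prefix k w) = size w.
Proof. by rewrite size_cat size_map -size_cat cat_take_drop. Qed.

Lemma take_flip_prefix i k w : i <= k -> take i (flip_prefix k w) = map negb (take i w).
Proof.
move=> le_ik; have [le_kw | lt_wk] := leqP k (size w).
  by rewrite takel_cat ?size_map ?size_takel ?map_take ?take_takel.
have le_wk := ltnW lt_wk.
by rewrite /flip_prefix (take_oversize le_wk) (drop_oversize le_wk) cats0 map_take.
Qed.

Lemma drop_flip_prefix k w : drop k (flip_prefix k w) = drop k w.
Proof.
have [le_kw | lt_wk] := leqP k (size w).
  by rewrite drop_size_cat // size_map size_takel.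
by rewrite !drop_oversize ?size_flip_prefix // ltnW.
Qed.

Lemma flip_prefixK k : involutive (flip_prefix k).
Proof.
move=> w; rewrite {1}/flip_prefix take_flip_prefix // drop_flip_prefix.
by rewrite (mapK negbK) cat_take_drop.
Qed.

Definition leads (b : bool) (w : seq bool) (k : nat) : bool :=
  count_mem (~~ b) (take k w) < count_mem b (take k w).

(* [first_lead b w] is [(size w).+1] when [b] never leads. *)
Definition first_lead b w : nat := find (leads b w) (iota 0 (size w).+1).

Definition reflect_lead b w := flip_prefix (first_lead b w) w.

Lemma leads_flip_prefix b k w i :
  i <= k -> leads (~~ b) (flip_prefix k w) i = leads b w i.
Proof. by move=> le_ik; rewrite /leads take_flip_prefix // !count_mem_map_negb !negbK. Qed.

Lemma first_lead_reflect b w : first_lead (~~ b) (reflect_lead b w) = first_lead b w.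
Proof.
rewrite /first_lead size_flip_prefix; apply: eq_find_prefix => i.
rewrite take_iota mem_iota add0n leq_min => /andP[_ /andP[le_i _]].
by rewrite leads_flip_prefix.
Qed.

Lemma reflect_leadK b w : reflect_lead (~~ b) (reflect_lead b w) = w.
Proof. by rewrite [in LHS]/reflect_lead first_lead_reflect flip_prefixK. Qed.

Lemma has_leadsE b w : has (leads b w) (iota 0 (size w).+1) = (first_lead b w <= size w).
Proof. by rewrite has_find size_iota. Qed.

Lemma count_take_first_lead b w : first_lead b w <= size w ->
  count_mem b (take (first_lead b w) w) = (count_mem (~~ b) (take (first_lead b w) w)).+1.
Proof.
move=> le_fw; have has_lead : has (leads b w) (iota 0 (size w).+1) by rewrite has_leadsE.
have := nth_find 0 has_lead; have := @before_find _ 0 (leads b w) (iota 0 (size w).+1).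
rewrite -/(first_lead b w); move: le_fw; clear has_lead.
case: (first_lead b w) => [|j]; first by rewrite /leads take0.
move=> lt_jw /(_ j (ltnSn j)); rewrite !nth_iota ?add0n //; last lia.
rewrite /leads (take_nth b lt_jw) -!cats1 !count_cat /=.
by case: b; case: (nth _ w j) => /=; lia.
Qed.

Lemma count_reflect_lead b w : first_lead b w <= size w ->
  (count_mem b (reflect_lead b w)).+1 = count_mem b w.
Proof.
move=> /count_take_first_lead count_k.
rewrite -[in RHS](cat_take_drop (first_lead b w) w) !count_cat count_k.
by rewrite count_mem_map_negb.
Qed.

Lemma dyckE w : dyck w =
  (count_mem true w == count_mem false w) && (size w < first_lead false w).
Proof.
rewrite /dyck andbC ltnNge -has_leadsE -all_predC; congr (_ && _).
  by congr (_ == _); apply: eq_count; case.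
apply: eq_all => k; rewrite /leads /= -leqNgt.
by congr (_ <= _); apply: eq_count; case.
Qed.

Lemma reflect_lead_tupleP b n (t : n.-tuple bool) : size (reflect_lead b t) == n.
Proof. by rewrite size_flip_prefix size_tuple. Qed.

Definition reflect_lead_tuple b n (t : n.-tuple bool) := Tuple (reflect_lead_tupleP b t).

Lemma reflect_lead_true_count n (w : seq bool) :
  size w = n + n -> count_mem true w = n.+1 ->
  count_mem true (reflect_lead true w) = n /\ ~~ dyck (reflect_lead true w).
Proof.
move=> size_w count_w; have := count_true_false w; rewrite size_w => count_w'.
have lead_w : first_lead true w <= size w.
  rewrite -has_leadsE; apply/hasP; exists (size w); first by rewrite mem_iota add0n ltnSn.
  by rewrite /leads take_size -[~~ true]/false; lia.
have := count_reflect_lead lead_w; have := count_true_false (reflect_lead true w).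
rewrite dyckE (first_lead_reflect true) !size_flip_prefix ltnNge lead_w andbF.
by split=> //; lia.
Qed.

Lemma reflect_lead_false_count n (w : seq bool) :
  size w = n + n -> count_mem true w = n -> ~~ dyck w ->
  count_mem true (reflect_lead false w) = n.+1.
Proof.
move=> size_w count_w; have := count_true_false w; rewrite size_w count_w => count_w'.
have count_w'' : count_mem false w = n by lia.
rewrite dyckE count_w count_w'' eqxx andTb -leqNgt => lead_w.
have := count_reflect_lead lead_w; have := count_true_false (reflect_lead false w).
by rewrite size_flip_prefix; lia.
Qed.

Lemma dyck_count n (w : seq bool) : size w = n + n -> dyck w ->
  count_mem true w = n /\ count_mem false w = n.
Proof.
move=> size_w; rewrite dyckE => /andP[/eqP bal _].
by have := count_true_false w; rewrite size_w -bal; lia.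
Qed.

Lemma card_dyck n :
  #|[set t : (n + n).-tuple bool | dyck t]| = 'C(n + n, n) - 'C(n + n, n.+1).
Proof.
rewrite -!card_tuples_count_true.
set Bal := [set t : (n + n).-tuple bool | count_mem true t == n].
set Dy := [set t : (n + n).-tuple bool | dyck t].
have Dy_Bal : Dy \subset Bal.
  by apply/subsetP => t; rewrite !inE => /(dyck_count (size_tuple t)) [-> _].
rewrite -(subKn (subset_leq_card Dy_Bal)) -[in X in _ - X](setIidPr Dy_Bal) -cardsD.
pose up := @reflect_lead_tuple true (n + n); pose down := @reflect_lead_tuple false (n + n).
have upK : cancel down up by move=> t; apply: val_inj; apply: reflect_leadK.
have downK : cancel up down by move=> t; apply: val_inj; apply: (reflect_leadK true).
congr (_ - _); rewrite -[RHS](card_imset _ (can_inj downK)); apply: eq_card => u.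
rewrite !inE; apply/andP/imsetP => [[not_dyck_u /eqP bal_u] | [t]].
  exists (down u); last by rewrite upK.
  by rewrite inE (reflect_lead_false_count (size_tuple u) bal_u not_dyck_u).
rewrite inE => /eqP /(reflect_lead_true_count (size_tuple t)) [count_up not_dyck_up] ->.
by rewrite count_up eqxx.
Qed.

Lemma catalan_card_dyck n : catalan n = #|[set t : (n + n).-tuple bool | dyck t]|.
Proof.
rewrite card_dyck /catalan -addnn.
have := mul_bin_left (n + n) n; rewrite addnK => bin_rec.
by rewrite -(@mulKn ('C(n + n, n) - 'C(n + n, n.+1)) n.+1) //; congr (_ %/ _); nia.
Qed.

Definition opkind_eqb (x y : opkind) : bool :=
  match x, y with
  | OCre, OCre | OAnn, OAnn | VCre, VCre | VAnn, VAnn => true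
  | _, _ => false
  end.
Lemma opkind_eqP : Equality.axiom opkind_eqb.
Proof. by case; case; constructor. Qed.
HB.instance Definition _ := hasDecEq.Build opkind opkind_eqP.

Lemma opkind_enumP : finite_axiom [:: OCre; OAnn; VCre; VAnn].
Proof. by case. Qed.
HB.instance Definition _ := Finite.copy opkind (fin_type opkind_enumP).

Lemma big_opkind (R : Type) (idx : R) (op : Monoid.law idx) (F : opkind -> R) :
  \big[op/idx]_k F k = op (F OCre) (op (F OAnn) (op (F VCre) (F VAnn))).
Proof. by rewrite /index_enum !unlock /= Monoid.mulm1. Qed.

Lemma forall_opkind (P : pred opkind) :
  [forall k, P k] = [&& P OCre, P OAnn, P VCre & P VAnn].
Proof. by apply/forallP/and4P => [all_P | [? ? ? ?] []] //; split; apply: all_P. Qed.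

Definition is_o (k : opkind) : bool := if k is (OCre | OAnn) then true else false.

(* Inverse of [w |-> (map is_o w, o_word w, v_word w)]: [m] marks the
   o-positions, which take their letters from [o], the others from [v]. *)
Fixpoint shuffle (m o v : seq bool) : seq opkind :=
  match m with
  | [::] => [::]
  | true :: m' => (if head false o then OCre else OAnn) :: shuffle m' (behead o) v
  | false :: m' => (if head false v then VAnn else VCre) :: shuffle m' o (behead v)
  end.

Lemma size_shuffle m o v : size (shuffle m o v) = size m.
Proof. by elim: m o v => [|[] m IHm] o v //=; rewrite IHm. Qed.

Lemma map_is_o_shuffle m o v : map is_o (shuffle m o v) = m.
Proof. by elim: m o v => [|[] m IHm] o v //=; case: ifP; rewrite IHm. Qed.

Lemma o_word_shuffle m o v : size o = count_mem true m -> o_word (shuffle m o v) = o.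
Proof.
elim: m o v => [|[] m IHm] o v /=; first by case: o.
  by case: o => [|[] o] //= [size_o]; rewrite /o_word /= -/(o_word _) IHm.
by move=> size_o; case: ifP; rewrite /o_word /= -/(o_word _) IHm.
Qed.

Lemma v_word_shuffle m o v : size v = count_mem false m -> v_word (shuffle m o v) = v.
Proof.
elim: m o v => [|[] m IHm] o v /=; first by case: v.
  by move=> size_v; case: ifP; rewrite /v_word /= -/(v_word _) IHm.
by case: v => [|[] v] //= [size_v]; rewrite /v_word /= -/(v_word _) IHm.
Qed.

Lemma shuffle_words w : shuffle (map is_o w) (o_word w) (v_word w) = w.
Proof.
elim: w => //= k w IHw.
by case: k; rewrite /o_word /v_word /= -/(o_word _) -/(v_word _) IHw.
Qed.

Lemma size_o_word w : size (o_word w) = count_mem true (map is_o w).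
Proof. by rewrite size_pmap count_map; apply: eq_count; case. Qed.

Lemma shuffle_tupleP N (m : N.-tuple bool) o v : size (shuffle m o v) == N.
Proof. by rewrite size_shuffle size_tuple. Qed.

Lemma card_shuffle N a b (P Q : pred (seq bool)) : a + b = N ->
  #|[set w : N.-tuple opkind |
     [&& P (o_word w), size (o_word w) == a, Q (v_word w) & size (v_word w) == b]]| =
  'C(N, a) * #|[set o : a.-tuple bool | P o]| * #|[set v : b.-tuple bool | Q v]|.
Proof.
move=> abN; rewrite -card_tuples_count_true -!cardsX.
set D := setX _ _.
pose sh (x : N.-tuple bool * a.-tuple bool * b.-tuple bool) :=
  Tuple (shuffle_tupleP x.1.1 x.1.2 x.2).
have in_D m o v : ((m, o, v) \in D) = [&& count_mem true m == a, P o & Q v].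
  by rewrite !inE andbA.
have count_false (m : N.-tuple bool) : count_mem true m = a -> count_mem false m = b.
  by move=> count_m; have := count_true_false m; rewrite size_tuple count_m; lia.
have sh_inj : {in D &, injective sh}.
  move=> [[m o] v] [[m' o'] v']; rewrite !in_D => /and3P[/eqP cm _ _] /and3P[/eqP cm' _ _].
  move=> /(congr1 val) /= eq_sh.
  have := congr1 (map is_o) eq_sh; rewrite !map_is_o_shuffle => /val_inj eq_m; subst m'.
  have := congr1 o_word eq_sh; rewrite !o_word_shuffle ?size_tuple // => /val_inj ->.
  have := congr1 v_word eq_sh; rewrite !v_word_shuffle ?size_tuple ?count_false //.
  by move=> /val_inj ->.
rewrite -(card_in_imset sh_inj); apply: eq_card => w; rewrite inE.
apply/and4P/imsetP => [[Po /eqP size_o Qv /eqP size_v] | [[[m o] v]]].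
  exists (map_tuple is_o w, Tuple (introT eqP size_o), Tuple (introT eqP size_v)).
    by rewrite in_D /= -size_o_word size_o eqxx Po Qv.
  by apply: val_inj; rewrite /= shuffle_words.
rewrite in_D => /and3P[/eqP cm Po Qv] ->.
by rewrite /= o_word_shuffle ?v_word_shuffle ?count_false ?size_tuple ?Po ?Qv ?eqxx.
Qed.

Lemma card_kind_of no nv k :
  #|@kind_of no nv @^-1: [set k]| = if is_o k then no else nv.
Proof.
have range k' lo hi : hi <= no + no + nv + nv ->
    (forall i, (@kind_of no nv i == k') = (lo <= i < hi)) ->
    #|@kind_of no nv @^-1: [set k']| = hi - lo.
  by move=> le_hi kind_k; rewrite -(card_ord_range lo le_hi); apply: eq_card => i; rewrite !inE.
have kind_range i : [/\ (@kind_of no nv i == OCre) = (0 <= i < no),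
    (kind_of i == OAnn) = (no <= i < no + no),
    (kind_of i == VCre) = (no + no <= i < no + no + nv) &
    (kind_of i == VAnn) = (no + no + nv <= i < no + no + nv + nv)].
  (* [==] on [opkind] is not unfolded by [/=], so expose [opkind_eqb]. *)
  have lt_iN := ltn_ord i; rewrite -![_ == _]/(opkind_eqb _ _) /kind_of.
  by case: (ltnP i no); case: (ltnP i (no + no));
    case: (ltnP i (no + no + nv)) => /= *; split; lia.
case: k => /=.
- by rewrite (range _ 0 no) ?subn0 // => [|i]; [lia | case: (kind_range i)].
- by rewrite (range _ no (no + no)) ?addnK // => [|i]; [lia | case: (kind_range i)].
- by rewrite (range _ (no + no) (no + no + nv)) ?addKn // => [|i]; [lia | case: (kind_range i)].
- by rewrite (range _ (no + no + nv) (no + no + nv + nv)) ?addKn // => i; case: (kind_range i).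
Qed.

Definition admissible_word (ks : seq opkind) := dyck (o_word ks) && dyck (v_word ks).

Lemma admissible_word_content no nv (w : seq opkind) :
  admissible_word w && [forall k, count_mem k w == if is_o k then no else nv] =
  [&& dyck (o_word w), size (o_word w) == no + no,
      dyck (v_word w) & size (v_word w) == nv + nv].
Proof.
have count_o b : count_mem b (o_word w) = count_mem (if b then OCre else OAnn) w.
  by rewrite count_pmap_mem; apply: eq_count; case: b; case.
have count_v b : count_mem b (v_word w) = count_mem (if b then VAnn else VCre) w.
  by rewrite count_pmap_mem; apply: eq_count; case: b; case.
rewrite forall_opkind /= -(count_o true) -(count_o false) -(count_v true) -(count_v false).
rewrite /admissible_word.
case dyck_o: (dyck (o_word w)); case dyck_v: (dyck (v_word w)); rewrite ?andbF //=.
apply/and4P/andP => [[/eqP c_ot /eqP c_of /eqP c_vt /eqP c_vf] | [/eqP size_o /eqP size_v]].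
  by rewrite -!count_true_false c_ot c_of c_vt c_vf !eqxx.
have [-> ->] := dyck_count size_o dyck_o; have [-> ->] := dyck_count size_v dyck_v.
by rewrite !eqxx.
Qed.

Theorem mainTheorem2 (L Nocc no nv : nat) (hN1 : 1 <= Nocc) (hNL : Nocc < L) :
  #|[set s : {perm 'I_(no + no + nv + nv)} | admissible s]| =
  catalan no * catalan nv * 'C(no + no + nv + nv, no + no)
    * (no`! ^ 2) * (nv`! ^ 2).
Proof.
(* The hypotheses on [L] and [Nocc] only describe the physical setting. *)
have -> : #|[set s : {perm 'I_(no + no + nv + nv)} | admissible s]| =
          #|[set t : (no + no + nv + nv).-tuple 'I_(no + no + nv + nv) |
             uniq t && admissible_word (map (@kind_of no nv) t)]|.
  rewrite -(card_perm_ord_tuples (fun t => admissible_word (map (@kind_of no nv) t))).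
  by apply: eq_card => s; rewrite !inE -map_comp.
rewrite (card_uniq_tuples_by_content _ (esym (card_ord _)) (@card_kind_of no nv)).
under eq_finset => w do rewrite admissible_word_content.
rewrite (card_shuffle dyck dyck (addnA _ _ _)) !catalan_card_dyck big_opkind /=.
by rewrite -!mulnn; nia.
Qed.
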